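(* Let $P$ be a discrete Dubins path, let $e=ab$ be an inflection edge of $P$ (traversed from $a$ to $b$) and let $bc$ be the edge of $P$ following $e$. Call a vector $T$ admissible for $e$ if the ray from $b$ in direction $T$ points into the (open) side of the supporting line of $e$ on which $bc$ lies. For a vector $T$, let $P(T)$ be the path obtained from $P$ by rigidly translating the part of $P$ starting from $b$ by $T$ and replacing the edge $ab$ by the segment from $a$ to $b+T$. Then for every vector $T$ admissible for $e$ there exists $\varepsilon>0$ such that $P(\varepsilon T)$ is a discrete curvature-constrained path.
   Context: Fix an angle $\theta$ with $0\le\theta\le\pi/2$ such that $2\pi/\theta$ is an integer, and a length $\ell>0$. For a polygonal path, the turn at an internal vertex is the angle in $[0,\pi]$ between the direction of the incoming edge and the direction of the outgoing edge. An edge is short if its length is $<\ell$, normal if $=\ell$, long if $>\ell$. An edge $e$ with an adjacent edge at each end is an inflection edge if its two adjacent edges lie on opposite sides of the supporting line of $e$, and non-inflection otherwise. A discrete curvature-constrained path is a polygonal path such that: (i) the turn at every internal vertex is at most $\theta$; (ii) no two adjacent edges are both short; (iii) for every short non-inflection edge $ab$ with adjacent edges $a^-a$ and $bb^+$, the angle between the directions $\overrightarrow{a^-a}$ and $\overrightarrow{bb^+}$ is at most $\theta$. A configuration is a pair $(u,U)$ of a point $u$ and a vector $U$ of length $\ell$. A polygonal path $P$ with first vertex $u$ starts at $(u,U)$ if prepending the segment from $u-U$ to $u$ (the pre-edge) yields a discrete curvature-constrained path; $P$ with last vertex $v$ ends at $(v,V)$ if appending the segment from $v$ to $v+V$ (the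 post-edge) yields a discrete curvature-constrained path. A discrete Dubins path is a discrete curvature-constrained path of minimum length among all those starting at a given configuration $\mathcal U$ and ending at a given configuration $\mathcal V$. Standing assumption: paths make a non-zero turn at every internal vertex. *)

From Stdlib Require Import Reals Lra List.
Import ListNotations.
Open Scope R_scope.

Definition pt := (R * R)%type.
Definition vadd (u v : pt) : pt := (fst u + fst v, snd u + snd v).
Definition vsub (u v : pt) : pt := (fst u - fst v, snd u - snd v).
Definition vscale (k : R) (u : pt) : pt := (k * fst u, k * snd u).
Definition dot (u v : pt) : R := fst u * fst v + snd u * snd v.
(* z-component of the cross product: its sign tells on which side of the
   line directed by u the vector v points *)
Definition cross (u v : pt) : R := fst u * snd v - snd u * fst v.
Definition norm (u : pt) : R := sqrt (dot u u).
Definition dist (p q : pt) : R := norm (vsub q p).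

Definition angle (u v : pt) : R := acos (dot u v / (norm u * norm v)).

(* A polygonal path is the list of its vertices v_0, ..., v_{n-1};
   its edges are v_j v_{j+1} for j + 1 < n. *)
Definition vtx (P : list pt) (j : nat) : pt := nth j P (0, 0).
Definition nedges (P : list pt) : nat := pred (length P).
Definition edir (P : list pt) (j : nat) : pt := vsub (vtx P (S j)) (vtx P j).
Definition elen (P : list pt) (j : nat) : R := norm (edir P j).

Fixpoint path_length (P : list pt) : R :=
  match P with
  | p :: ((q :: _) as P') => dist p q + path_length P'
  | _ => 0
  end.

Definition nondegenerate (P : list pt) : Prop :=
  forall j, (j < nedges P)%nat -> vtx P j <> vtx P (S j).

(* turn at internal vertex j (0 < j < length P - 1) *)
Definition turn (P : list pt) (j : nat) : R := angle (edir P (pred j)) (edir P j).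

Definition short (l : R) (P : list pt) (j : nat) : Prop := elen P j < l.

Definition has_both_adjacent (P : list pt) (j : nat) : Prop :=
  (1 <= j)%nat /\ (S (S j) < length P)%nat.

(* edge j = v_j v_{j+1} is an inflection edge: its adjacent edges v_{j-1}v_j and
   v_{j+1}v_{j+2} lie (strictly) on opposite sides of its supporting line. *)
Definition inflection (P : list pt) (j : nat) : Prop :=
  has_both_adjacent P j /\
  cross (edir P j) (vsub (vtx P (pred j)) (vtx P j)) *
  cross (edir P j) (vsub (vtx P (S (S j))) (vtx P j)) < 0.

Definition non_inflection (P : list pt) (j : nat) : Prop :=
  has_both_adjacent P j /\ ~ inflection P j.

Definition dccp (l theta : R) (P : list pt) : Prop :=
  nondegenerate P /\
  (forall j, (1 <= j)%nat -> (S j < length P)%nat -> turn P j <= theta) /\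
  (forall j, (S j < nedges P)%nat -> ~ (short l P j /\ short l P (S j))) /\
  (forall j, short l P j -> non_inflection P j ->
     angle (edir P (pred j)) (edir P (S j)) <= theta).

Definition nonzero_turns (P : list pt) : Prop :=
  forall j, (1 <= j)%nat -> (S j < length P)%nat -> turn P j <> 0.

Definition is_config (l : R) (U : pt) : Prop := norm U = l.

Definition starts_at (l theta : R) (P : list pt) (u U : pt) : Prop :=
  exists P', P = u :: P' /\ dccp l theta (vsub u U :: P).

Definition ends_at (l theta : R) (P : list pt) (v V : pt) : Prop :=
  P <> [] /\ last P (0, 0) = v /\ dccp l theta (P ++ [vadd v V]).

Definition dubins (l theta : R) (u U v V : pt) (P : list pt) : Prop :=
  dccp l theta P /\ nonzero_turns P /\
  starts_at l theta P u U /\ ends_at l theta P v V /\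
  forall Q, dccp l theta Q -> nonzero_turns Q ->
    starts_at l theta Q u U -> ends_at l theta Q v V ->
    path_length P <= path_length Q.

(* P(T): translate the part of P starting from vertex k (= b) by T; the edge
   v_{k-1} v_k is thereby replaced by the segment from v_{k-1} to v_k + T. *)
Definition translate_tail (P : list pt) (k : nat) (T : pt) : list pt :=
  firstn k P ++ map (vadd T) (skipn k P).

(* T admissible for the inflection edge j = ab (a = v_j, b = v_{j+1}, c = v_{j+2}):
   the ray from b in direction T points into the open side of line ab containing bc *)
Definition admissible (P : list pt) (j : nat) (T : pt) : Prop :=
  cross (edir P j) T * cross (edir P j) (edir P (S j)) > 0.

From Pilot Require Import Defs.
From Stdlib Require Import Reals List Lra Lia Psatz Classical.
Import ListNotations.
Open Scope R_scope.

(* Translating the part of P from b by eps T changes a single edge direction, that of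
   e = ab, from d to d + eps T; every other edge keeps its direction and length.  As e is
   an inflection edge, the directions of its two neighbours lie on the same side of d, and
   an admissible T points to that side too.  So for small eps the tilt decreases the turns
   at a and b, keeps e an inflection edge, and preserves condition (iii) at a short
   non-inflection neighbour, whose other neighbour lies on that side as well because all
   turns are at most pi/2.  What remains is that e might become short next to a short
   neighbour.  In a discrete Dubins path no neighbour of an inflection edge is short:
   sliding the common vertex along a short neighbour tilts e in the same way and strictly
   shortens the path (the tilted e is not parallel to that neighbour), contradicting
   minimality. *)

Ltac vexpand := unfold vadd, vsub, vscale, dot, cross; simpl;
  repeat match goal with
  | |- context [fst ?t] => lazymatch t with (_,_) => fail | _ => destruct t end
  | |- context [snd ?t] => lazymatch t with (_,_) => fail | _ => destruct t end
  end; simpl.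
Ltac vring := vexpand; ring.
Ltac vring_pt := vexpand; f_equal; ring.

Lemma dot_comm u v : dot u v = dot v u.
Proof. vring. Qed.

Lemma cross_anti u v : cross u v = - cross v u.
Proof. vring. Qed.

Lemma dot_self_nonneg u : 0 <= dot u u.
Proof. destruct u as [a b]; unfold dot; simpl; nra. Qed.

Lemma dot_self_pos u : u <> (0,0) -> 0 < dot u u.
Proof.
  destruct u as [a b]; unfold dot; simpl; intros Hu.
  destruct (Req_dec a 0), (Req_dec b 0); subst; try nra. now contradiction Hu.
Qed.

Lemma norm_sq u : norm u * norm u = dot u u.
Proof. apply sqrt_sqrt, dot_self_nonneg. Qed.

Lemma norm_nonneg u : 0 <= norm u.
Proof. apply sqrt_pos. Qed.

Lemma norm_pos u : u <> (0,0) -> 0 < norm u.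
Proof. intros Hu; apply sqrt_lt_R0, dot_self_pos, Hu. Qed.

Lemma norm_scale c u : 0 <= c -> norm (vscale c u) = c * norm u.
Proof.
  intros Hc; unfold norm.
  replace (dot (vscale c u) (vscale c u)) with ((c * c) * dot u u) by vring.
  rewrite sqrt_mult by (nra || apply dot_self_nonneg). now rewrite sqrt_square.
Qed.

Lemma vscale_neq0 c u : c <> 0 -> u <> (0,0) -> vscale c u <> (0,0).
Proof.
  destruct u as [a b]; unfold vscale; simpl; intros Hc Hu E; injection E as E1 E2.
  apply Rmult_integral in E1, E2; apply Hu; f_equal; lra.
Qed.

Lemma cross_neq0_l u v : cross u v <> 0 -> u <> (0,0).
Proof. intros H ->; apply H; vring. Qed.

Lemma cross_neq0_r u v : cross u v <> 0 -> v <> (0,0).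
Proof. intros H ->; apply H; vring. Qed.

Lemma lagrange_identity u v : dot u v * dot u v + cross u v * cross u v = dot u u * dot v v.
Proof. vring. Qed.

Lemma dot_lt_norm u v : cross u v <> 0 -> dot u v < norm u * norm v.
Proof.
  intros H.
  pose proof (norm_pos _ (cross_neq0_l _ _ H)); pose proof (norm_pos _ (cross_neq0_r _ _ H)).
  pose proof (lagrange_identity u v); pose proof (norm_sq u); pose proof (norm_sq v).
  assert (0 < cross u v * cross u v) by (apply Rsqr_pos_lt; auto).
  assert (0 < norm u * norm v) by nra. nra.
Qed.

Lemma norm_add_scale_sq d w t :
  norm (vadd d (vscale t w)) * norm (vadd d (vscale t w))
  = dot d d + 2 * t * dot d w + t * t * dot w w.
Proof. rewrite norm_sq; vring. Qed.

Lemma norm_le_add_scale d w t : 0 <= t -> 0 <= dot d w -> norm d <= norm (vadd d (vscale t w)).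
Proof.
  intros Ht Hdw; unfold norm; apply sqrt_le_1_alt.
  replace (dot (vadd d (vscale t w)) (vadd d (vscale t w)))
    with (dot d d + 2 * t * dot d w + t * t * dot w w) by vring.
  pose proof (dot_self_nonneg w). nra.
Qed.

Lemma norm_add_scale_lt d w t : 0 < t -> cross d w <> 0 ->
  norm (vadd d (vscale t w)) < norm d + t * norm w.
Proof.
  intros Ht H. pose proof (dot_lt_norm _ _ H).
  pose proof (norm_add_scale_sq d w t); pose proof (norm_sq d); pose proof (norm_sq w).
  pose proof (norm_nonneg d); pose proof (norm_nonneg w).
  pose proof (norm_nonneg (vadd d (vscale t w))).
  set (S := norm (vadd d (vscale t w))) in *.
  destruct (Rlt_dec S (norm d + t * norm w)) as [|Hge]; [assumption|exfalso].
  assert (0 <= t * norm w) by nra.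
  assert ((norm d + t * norm w) * (norm d + t * norm w) <= S * S) by (apply Rmult_le_compat; lra).
  nra.
Qed.

Lemma acos_antitone x y : x <= y -> acos y <= acos x.
Proof.
  intros Hxy. pose proof (acos_bound x); pose proof (acos_bound y).
  destruct (Rle_dec 1 y).
  { replace (acos y) with 0 by (unfold acos; repeat case Rle_dec; lra); lra. }
  destruct (Rle_dec x (-1)).
  { replace (acos x) with PI by (unfold acos; repeat case Rle_dec; lra); lra. }
  destruct (Rle_dec (acos y) (acos x)) as [|Hlt]; [assumption|exfalso].
  pose proof (cos_decreasing_1 (acos x) (acos y)) as Hcos.
  rewrite !cos_acos in Hcos by lra. lra.
Qed.

Lemma nonneg_of_acos_le_PI2 x : acos x <= PI / 2 -> 0 <= x.
Proof.
  intros H. destruct (Rle_dec x (-1)).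
  { replace (acos x) with PI in H by (unfold acos; repeat case Rle_dec; lra).
    pose proof PI_RGT_0; lra. }
  destruct (Rle_dec 1 x); [lra|].
  pose proof (acos_bound x).
  assert (Hc : 0 <= cos (acos x)) by (apply cos_ge_0; pose proof PI_RGT_0; lra).
  rewrite cos_acos in Hc by lra. exact Hc.
Qed.

Lemma acos_neq0 x : x < 1 -> acos x <> 0.
Proof.
  intros H E. destruct (Rle_dec x (-1)).
  { replace (acos x) with PI in E by (unfold acos; repeat case Rle_dec; lra).
    pose proof PI_RGT_0; lra. }
  pose proof (cos_acos x ltac:(lra)) as Hc. rewrite E, cos_0 in Hc. lra.
Qed.

Lemma angle_comm u v : angle u v = angle v u.
Proof. unfold angle; now rewrite dot_comm, Rmult_comm. Qed.

Lemma angle_scale_r u v c : 0 < c -> angle u (vscale c v) = angle u v.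
Proof.
  intros Hc; unfold angle; f_equal. rewrite norm_scale by lra.
  replace (dot u (vscale c v)) with (c * dot u v) by vring.
  destruct (Req_dec (norm u * norm v) 0) as [E|E].
  - replace (norm u * (c * norm v)) with (c * (norm u * norm v)) by ring.
    rewrite E, Rmult_0_r; unfold Rdiv; now rewrite !Rinv_0, !Rmult_0_r.
  - assert (norm u <> 0) by (intros E'; apply E; rewrite E'; ring).
    assert (norm v <> 0) by (intros E'; apply E; rewrite E'; ring).
    field; lra.
Qed.

Lemma angle_scale_l u v c : 0 < c -> angle (vscale c u) v = angle u v.
Proof. intros; now rewrite angle_comm, angle_scale_r, angle_comm. Qed.

Lemma dot_nonneg_of_angle_le_PI2 u v : angle u v <= PI / 2 -> 0 <= dot u v.
Proof.
  unfold angle; intros H%nonneg_of_acos_le_PI2.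
  pose proof (norm_nonneg u); pose proof (norm_nonneg v).
  pose proof (lagrange_identity u v); rewrite <- (norm_sq u), <- (norm_sq v) in *.
  destruct (Req_dec (norm u * norm v) 0) as [E|E].
  - assert (dot u v * dot u v <= 0) by nra. nra.
  - replace (dot u v) with (dot u v / (norm u * norm v) * (norm u * norm v))
      by (field; split; intros E'; apply E; rewrite E'; ring).
    apply Rmult_le_pos; nra.
Qed.

Lemma angle_neq0 u v : cross u v <> 0 -> angle u v <> 0.
Proof.
  intros H; apply acos_neq0.
  pose proof (norm_pos _ (cross_neq0_l _ _ H)); pose proof (norm_pos _ (cross_neq0_r _ _ H)).
  apply (Rmult_lt_reg_r (norm u * norm v)); [nra|].
  replace (dot u v / (norm u * norm v) * (norm u * norm v)) with (dot u v) by (field; lra).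
  rewrite Rmult_1_l. now apply dot_lt_norm.
Qed.

Lemma angle_le_of_cos_ge u v v' : u <> (0,0) -> v <> (0,0) -> v' <> (0,0) ->
  dot u v * norm v' <= dot u v' * norm v -> angle u v' <= angle u v.
Proof.
  intros Hu%norm_pos Hv%norm_pos Hv'%norm_pos H; unfold angle; apply acos_antitone.
  apply (Rmult_le_reg_r (norm v * norm v')); [nra|].
  replace (dot u v / (norm u * norm v) * (norm v * norm v')) with (dot u v * norm v' / norm u)
    by (field; lra).
  replace (dot u v' / (norm u * norm v') * (norm v * norm v')) with (dot u v' * norm v / norm u)
    by (field; lra).
  apply Rmult_le_compat_r; [apply Rlt_le, Rinv_0_lt_compat|]; lra.
Qed.

Definition eventually (Q : R -> Prop) : Prop :=
  exists e, 0 < e /\ forall t, 0 < t < e -> Q t.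

Lemma eventually_and (Q1 Q2 : R -> Prop) :
  eventually Q1 -> eventually Q2 -> eventually (fun t => Q1 t /\ Q2 t).
Proof.
  intros [e1 [He1 H1]] [e2 [He2 H2]]. exists (Rmin e1 e2); split; [now apply Rmin_glb_lt|].
  intros t Ht; pose proof (Rmin_l e1 e2); pose proof (Rmin_r e1 e2).
  split; [apply H1|apply H2]; lra.
Qed.

Lemma eventually_impl (Q1 Q2 : R -> Prop) :
  eventually Q1 -> (forall t, 0 < t -> Q1 t -> Q2 t) -> eventually Q2.
Proof. intros [e [He H]] HQ; exists e; split; [lra|]; intros t Ht; apply HQ, H; lra. Qed.

Lemma eventually_always (Q : R -> Prop) : (forall t, 0 < t -> Q t) -> eventually Q.
Proof. intros H; exists 1; split; [lra|]; intros t Ht; apply H; lra. Qed.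

Lemma eventually_lt c : 0 < c -> eventually (fun t => t < c).
Proof. intros Hc; exists c; split; [lra|]; intros t Ht; lra. Qed.

Lemma eventually_if (P : Prop) (Q : R -> Prop) :
  (P -> eventually Q) -> eventually (fun t => P -> Q t).
Proof.
  intros H; destruct (classic P) as [HP|HP].
  - apply (eventually_impl _ _ (H HP)); auto.
  - apply eventually_always; intros; contradiction.
Qed.

Lemma eventually_witness (Q : R -> Prop) : eventually Q -> exists t, 0 < t /\ Q t.
Proof. intros [e [He H]]; exists (e / 2); split; [lra|]; apply H; lra. Qed.

Lemma eventually_quadratic_pos a b c : 0 < a -> eventually (fun t => 0 < a + b * t + c * (t * t)).
Proof.
  intros Ha. set (M := Rabs b + Rabs c + 1).
  pose proof (Rabs_pos b); pose proof (Rabs_pos c).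
  pose proof (Rle_abs (- b)); pose proof (Rle_abs (- c)); rewrite Rabs_Ropp in *.
  exists (Rmin 1 (a / (2 * M))); split.
  { apply Rmin_glb_lt; [lra|]; apply Rdiv_lt_0_compat; unfold M; lra. }
  intros t [Ht Hte]; pose proof (Rmin_l 1 (a / (2 * M))); pose proof (Rmin_r 1 (a / (2 * M))).
  assert (Hta : t * (2 * M) < a).
  { apply (Rmult_lt_reg_r (/ (2 * M))); [apply Rinv_0_lt_compat; unfold M; lra|].
    rewrite Rmult_assoc, Rinv_r by (unfold M; lra). fold (a / (2 * M)); lra. }
  unfold M in Hta. assert (t * t <= t) by nra. nra.
Qed.

Lemma eventually_affine_nonneg a b : 0 < a \/ (a = 0 /\ 0 <= b) ->
  eventually (fun t => 0 <= a + b * t).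
Proof.
  intros [Ha|[-> Hb]].
  - apply (eventually_impl _ _ (eventually_quadratic_pos a b 0 Ha)); intros; lra.
  - apply eventually_always; intros; nra.
Qed.

Lemma same_sign_trans a b c : 0 < a * b -> 0 < a * c -> 0 < b * c.
Proof. intros Hab Hac. assert (0 < (a * a) * (b * c)) by nra. nra. Qed.

(** * Tilting a direction *)

Lemma angle_tilt_le x d T : 0 <= dot x d -> 0 < cross d x * cross d T ->
  eventually (fun t => angle x (vadd d (vscale t T)) <= angle x d).
Proof.
  intros Hp HK.
  assert (HdT : cross d T <> 0) by (intros E; rewrite E in HK; lra).
  assert (Hdx : cross d x <> 0) by (intros E; rewrite E in HK; lra).
  pose proof (dot_self_pos _ (cross_neq0_l _ _ Hdx)) as Hdd.
  set (p := dot x d) in *; set (q := dot x T); set (K := cross d x * cross d T) in *.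
  assert (Hq : q * dot d d = p * dot d T + K) by (unfold p, q, K; vring).
  set (c := q * q * dot d d - p * p * dot T T).
  assert (Hcases : 0 < p \/ (p = 0 /\ 0 < q)).
  { destruct Hp as [Hp|Hp]; [now left|right; split; [easy|]].
    rewrite <- Hp, Rmult_0_l, Rplus_0_l in Hq. nra. }
  assert (E1 : eventually (fun t => 0 <= p + q * t)).
  { apply eventually_affine_nonneg; destruct Hcases as [|[]]; [left|right]; auto; lra. }
  assert (E2 : eventually (fun t => 0 <= 2 * p * K + c * t)).
  { apply eventually_affine_nonneg; destruct Hcases as [|[Hp0 _]]; [left; nra|right].
    unfold c; rewrite Hp0; split; [ring|]. pose proof (dot_self_nonneg T); nra. }
  apply (eventually_impl _ _ (eventually_and _ _ E1 E2)); intros t Ht [H1 H2].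
  set (D := vadd d (vscale t T)).
  assert (HD : cross d D = t * cross d T) by (unfold D; vring).
  assert (HD0 : D <> (0,0)).
  { apply (cross_neq0_r d); rewrite HD; apply Rmult_integral_contrapositive; split; lra. }
  apply angle_le_of_cos_ge;
    [exact (cross_neq0_r _ _ Hdx)|exact (cross_neq0_l _ _ Hdx)|exact HD0|].
  replace (dot x D) with (p + q * t) by (unfold p, q, D; vring).
  assert (Hdiff : (p + q * t) * (p + q * t) * dot d d
                  - p * p * (dot d d + 2 * t * dot d T + t * t * dot T T)
                  = t * (2 * p * K + c * t)).
  { replace K with (q * dot d d - p * dot d T) by lra; unfold c; ring. }
  assert (Hsq : (p * norm D) * (p * norm D) <= ((p + q * t) * norm d) * ((p + q * t) * norm d)).
  { replace ((p * norm D) * (p * norm D)) with (p * p * (norm D * norm D)) by ring.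
    replace (((p + q * t) * norm d) * ((p + q * t) * norm d))
      with ((p + q * t) * (p + q * t) * (norm d * norm d)) by ring.
    unfold D; rewrite norm_add_scale_sq, norm_sq. nra. }
  apply Rsqr_incr_0_var; [exact Hsq|]. pose proof (norm_nonneg d); nra.
Qed.

Lemma angle_tilt_le_r x d T : 0 <= dot d x -> 0 < cross d x * cross d T ->
  eventually (fun t => angle (vadd d (vscale t T)) x <= angle d x).
Proof.
  intros H1 H2; rewrite dot_comm in H1.
  apply (eventually_impl _ _ (angle_tilt_le x d T H1 H2)); intros t _.
  now rewrite !(angle_comm _ x).
Qed.

Lemma cross_sign_of_acute u v x : cross u v <> 0 -> x <> (0,0) ->
  0 <= dot u v -> 0 <= dot v x -> 0 <= dot u x ->
  cross v u * cross v x <= 0 -> 0 < cross u x * cross u v.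
Proof.
  intros Huv Hx Hduv Hdvx Hdux Hside.
  pose proof (dot_self_pos _ (cross_neq0_l _ _ Huv)); pose proof (dot_self_pos _ Hx).
  assert (Hcc : 0 < cross u v * cross u v) by (apply Rsqr_pos_lt; auto).
  set (X := cross u x * cross u v).
  assert (I1 : cross v u * cross v x * dot u u = dot u x * (cross u v * cross u v) - X * dot u v)
    by (unfold X; vring).
  assert (I2 : dot v x * dot u u = dot u x * dot u v + X) by (unfold X; vring).
  assert (I3 : dot u x * dot u x + cross u x * cross u x = dot u u * dot x x) by vring.
  destruct (Rlt_dec 0 X) as [|Hn]; [assumption|exfalso].
  assert (Hux : dot u x = 0) by nra.
  assert (HX : X = 0) by (rewrite Hux in I2; nra).
  assert (Hcux : cross u x = 0).
  { unfold X in HX; apply Rmult_integral in HX as [|]; [easy|]. lra. }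
  rewrite Hux, Hcux in I3. nra.
Qed.

Lemma edir_neq0 l th X i : dccp l th X -> (S i < length X)%nat -> edir X i <> (0,0).
Proof.
  intros [Hnd _] Hi E; apply (Hnd i); [unfold nedges; lia|].
  unfold edir, vsub in E; destruct (vtx X (S i)), (vtx X i); simpl in E.
  injection E as E1 E2; f_equal; lra.
Qed.

Lemma inflection_iff X i : inflection X i <-> has_both_adjacent X i /\
  0 < cross (edir X i) (edir X (pred i)) * cross (edir X i) (edir X (S i)).
Proof.
  unfold inflection; split; intros [[Hi1 Hi2] H]; split; try split; auto;
  destruct i as [|i]; try lia; unfold edir in *; simpl pred in *; revert H; vexpand; nra.
Qed.

Lemma dot_nonneg_turn l th X i : th <= PI / 2 -> dccp l th X ->
  (1 <= i)%nat -> (S i < length X)%nat -> 0 <= dot (edir X (pred i)) (edir X i).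
Proof.
  intros Hth (_ & Hturn & _) Hi1 Hi2.
  apply dot_nonneg_of_angle_le_PI2. specialize (Hturn i Hi1 Hi2); unfold turn in Hturn; lra.
Qed.

Section ShortNonInflection.
Variables (l th : R) (X : list pt) (k : nat).
Hypotheses (Hth : th <= PI / 2) (HX : dccp l th X)
  (Hshort : short l X k) (Hni : non_inflection X k).

Let x := edir X (pred k).
Let w := edir X k.
Let z := edir X (S k).

Lemma short_noninflection_bounds :
  0 <= dot x w /\ 0 <= dot w z /\ 0 <= dot x z /\ x <> (0,0) /\ z <> (0,0) /\
  cross w x * cross w z <= 0.
Proof.
  pose proof Hni as [[Hk1 Hk2] Hinf]. pose proof HX as (_ & _ & _ & Hiii).
  specialize (Hiii k Hshort Hni).
  unfold x, w, z; repeat split.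
  - apply (dot_nonneg_turn l th); auto; lia.
  - replace k with (pred (S k)) at 1 by lia. apply (dot_nonneg_turn l th); auto; lia.
  - apply dot_nonneg_of_angle_le_PI2; lra.
  - apply (edir_neq0 l th); auto; lia.
  - apply (edir_neq0 l th); auto; lia.
  - apply Rnot_lt_le; intros H; apply Hinf, inflection_iff; split; [split|]; auto.
Qed.

Lemma short_noninflection_cross_prev : cross x w <> 0 -> 0 < cross x z * cross x w.
Proof.
  intros Hxw; pose proof short_noninflection_bounds as (Hxw' & Hwz & Hxz & Hx & Hz & Hside).
  apply cross_sign_of_acute; auto.
Qed.

Lemma short_noninflection_cross_next : cross z w <> 0 -> 0 < cross z x * cross z w.
Proof.
  intros Hzw; pose proof short_noninflection_bounds as (Hxw & Hwz & Hxz & Hx & Hz & Hside).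
  apply cross_sign_of_acute; rewrite ?(dot_comm z), ?(dot_comm w x); auto; lra.
Qed.
End ShortNonInflection.

(* The constraints of [dccp] that involve edge [i]: the edges [i-1] and [i+1] will only
   be rescaled, so these are all that change when edge [i] gets direction [D]. *)
Record good_tilt (l th : R) (X : list pt) (i : nat) (D : pt) : Prop := {
  tilt_turn_prev : angle (edir X (pred i)) D <= th;
  tilt_turn_next : angle D (edir X (S i)) <= th;
  tilt_inflection : 0 < cross D (edir X (pred i)) * cross D (edir X (S i));
  tilt_inflection_prev : inflection X (pred i) ->
    0 < cross (edir X (pred i)) (edir X (pred (pred i))) * cross (edir X (pred i)) D;
  tilt_inflection_next : inflection X (S i) ->
    0 < cross (edir X (S i)) D * cross (edir X (S i)) (edir X (S (S i)));
  tilt_short_prev : short l X (pred i) -> non_inflection X (pred i) ->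
    angle (edir X (pred (pred i))) D <= th;
  tilt_short_next : short l X (S i) -> non_inflection X (S i) ->
    angle D (edir X (S (S i))) <= th
}.

Section TiltEventually.
Variables (l th : R) (X : list pt) (i : nat) (T : pt).
Hypotheses (Hth : th <= PI / 2) (HX : dccp l th X) (Hinf : inflection X i)
  (HT : 0 < cross (edir X i) (edir X (pred i)) * cross (edir X i) T).

Let x := edir X (pred (pred i)).
Let w := edir X (pred i).
Let d := edir X i.
Let z := edir X (S i).
Let y := edir X (S (S i)).

Lemma tilt_bounds : (1 <= i)%nat /\ (S (S i) < length X)%nat /\
  0 < cross d w * cross d z /\ 0 < cross d z * cross d T /\ 0 <= dot w d /\ 0 <= dot d z.
Proof.
  pose proof Hinf as [[Hi1 Hi2] Hwz]%inflection_iff.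
  repeat split; auto.
  - apply (same_sign_trans (cross d w)); auto.
  - apply (dot_nonneg_turn l th); auto; lia.
  - apply (dot_nonneg_turn l th X (S i)); auto; lia.
Qed.

Lemma eventually_tilt_turns : eventually (fun t =>
  angle w (vadd d (vscale t T)) <= th /\ angle (vadd d (vscale t T)) z <= th).
Proof.
  pose proof tilt_bounds as (Hi1 & Hi2 & _ & Hzt & Hwd & Hdz).
  pose proof HX as (_ & Hturn & _).
  assert (Hturn_i : angle w d <= th) by (apply Hturn; lia).
  assert (Hturn_Si : angle d z <= th) by (apply (Hturn (S i)); lia).
  apply (eventually_impl _ _ (eventually_and _ _
    (angle_tilt_le w d T Hwd HT) (angle_tilt_le_r z d T Hdz Hzt))); intros t _ []; lra.
Qed.

Lemma eventually_tilt_inflections : eventually (fun t =>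
  0 < cross (vadd d (vscale t T)) w * cross (vadd d (vscale t T)) z /\
  (inflection X (pred i) -> 0 < cross w x * cross w (vadd d (vscale t T))) /\
  (inflection X (S i) -> 0 < cross z (vadd d (vscale t T)) * cross z y)).
Proof.
  pose proof tilt_bounds as (Hi1 & _ & Hwz & _).
  apply eventually_and; [|apply eventually_and].
  - apply (eventually_impl _ _ (eventually_quadratic_pos _
      (cross d w * cross T z + cross T w * cross d z) (cross T w * cross T z) Hwz)).
    intros t _; replace (cross (vadd d (vscale t T)) w * cross (vadd d (vscale t T)) z) with
      (cross d w * cross d z + (cross d w * cross T z + cross T w * cross d z) * t
       + cross T w * cross T z * (t * t)) by vring; auto.
  - apply eventually_if; intros [_ Hwx]%inflection_iff.
    replace (S (pred i)) with i in Hwx by lia.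
    apply (eventually_impl _ _ (eventually_quadratic_pos _ (cross w x * cross w T) 0 Hwx)).
    intros t _; replace (cross w x * cross w (vadd d (vscale t T))) with
      (cross w x * cross w d + cross w x * cross w T * t + 0 * (t * t)) by vring; auto.
  - apply eventually_if; intros [_ Hzy]%inflection_iff.
    apply (eventually_impl _ _ (eventually_quadratic_pos _ (cross z T * cross z y) 0 Hzy)).
    intros t _; replace (cross z (vadd d (vscale t T)) * cross z y) with
      (cross z d * cross z y + cross z T * cross z y * t + 0 * (t * t)) by vring; auto.
Qed.

Lemma eventually_tilt_short_prev : eventually (fun t =>
  short l X (pred i) -> non_inflection X (pred i) -> angle x (vadd d (vscale t T)) <= th).
Proof.
  pose proof tilt_bounds as (Hi1 & _ & Hwz & _).
  assert (Hdw : cross d w <> 0) by (intros E; rewrite E in Hwz; lra).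
  apply eventually_if; intros Hs; apply eventually_if; intros Hni.
  pose proof HX as (_ & _ & _ & Hiii).
  pose proof (Hiii _ Hs Hni) as Hxd; replace (S (pred i)) with i in Hxd by lia; fold x d in Hxd.
  pose proof (short_noninflection_cross_next l th X (pred i) Hth HX Hs Hni) as Hside.
  replace (S (pred i)) with i in Hside by lia.
  assert (Hxt : 0 < cross d x * cross d T).
  { apply (same_sign_trans (cross d w)); [|exact HT].
    rewrite Rmult_comm; apply Hside; exact Hdw. }
  assert (Hdot : 0 <= dot x d) by (apply dot_nonneg_of_angle_le_PI2; lra).
  apply (eventually_impl _ _ (angle_tilt_le x d T Hdot Hxt)); intros; lra.
Qed.

Lemma eventually_tilt_short_next : eventually (fun t =>
  short l X (S i) -> non_inflection X (S i) -> angle (vadd d (vscale t T)) y <= th).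
Proof.
  pose proof tilt_bounds as (_ & _ & Hwz & Hzt & _).
  assert (Hdz : cross d z <> 0) by (intros E; rewrite E in Hwz; lra).
  apply eventually_if; intros Hs; apply eventually_if; intros Hni.
  pose proof HX as (_ & _ & _ & Hiii).
  pose proof (Hiii _ Hs Hni) as Hdy; simpl pred in Hdy; fold d y in Hdy.
  pose proof (short_noninflection_cross_prev l th X (S i) Hth HX Hs Hni Hdz) as Hside.
  simpl pred in Hside; fold d y z in Hside.
  assert (Hyt : 0 < cross d y * cross d T).
  { apply (same_sign_trans (cross d z)); [rewrite Rmult_comm|]; assumption. }
  assert (Hdot : 0 <= dot d y) by (apply dot_nonneg_of_angle_le_PI2; lra).
  apply (eventually_impl _ _ (angle_tilt_le_r y d T Hdot Hyt)); intros; lra.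
Qed.

Lemma eventually_good_tilt : eventually (fun t => good_tilt l th X i (vadd d (vscale t T))).
Proof.
  apply (eventually_impl _ _ (eventually_and _ _ eventually_tilt_turns
    (eventually_and _ _ eventually_tilt_inflections
      (eventually_and _ _ eventually_tilt_short_prev eventually_tilt_short_next)))).
  intros t _ ([] & (? & ? & ?) & ? & ?); constructor; auto.
Qed.
End TiltEventually.

Definition pos_multiple (u v : pt) : Prop := exists c, 0 < c /\ u = vscale c v.

Lemma pos_multiple_refl u : pos_multiple u u.
Proof. exists 1; split; [lra|]; vring_pt. Qed.

Lemma pos_multiple_neq0 u v : pos_multiple u v -> v <> (0,0) -> u <> (0,0).
Proof. intros (c & Hc & ->) Hv; apply vscale_neq0; lra || auto. Qed.

Lemma angle_pos_multiple u u' v v' :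
  pos_multiple u' u -> pos_multiple v' v -> angle u' v' = angle u v.
Proof. intros (a & Ha & ->) (b & Hb & ->); now rewrite angle_scale_l, angle_scale_r. Qed.

Lemma cross_sign_pos_multiple u u' v v' x x' :
  pos_multiple u' u -> pos_multiple v' v -> pos_multiple x' x ->
  0 < cross u' v' * cross u' x' <-> 0 < cross u v * cross u x.
Proof.
  intros (a & Ha & ->) (b & Hb & ->) (c & Hc & ->).
  replace (cross (vscale a u) (vscale b v) * cross (vscale a u) (vscale c x))
    with ((a * a * b * c) * (cross u v * cross u x)) by vring.
  assert (0 < a * a * b * c) by (repeat apply Rmult_lt_0_compat; lra).
  split; intros; nra.
Qed.

Section Tilt.
Variables (l th : R) (X X' : list pt) (i : nat) (D : pt).
Hypotheses (HX : dccp l th X) (Hinf : inflection X i) (Hgood : good_tilt l th X i D)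
  (Hlen : length X' = length X) (HD : edir X' i = D)
  (Hmult : forall k, (S k < length X)%nat -> k <> i -> pos_multiple (edir X' k) (edir X k))
  (Hshort : forall k, (S k < length X)%nat -> k <> i -> short l X' k -> short l X k)
  (Hshort_i : short l X' i -> ~ short l X (pred i) /\ ~ short l X (S i)).

(* The directions of the edges of [X'], up to positive factors. *)
Let tilt_dir k := if Nat.eq_dec k i then D else edir X k.

Lemma tilt_dir_at : tilt_dir i = D.
Proof. unfold tilt_dir; now destruct (Nat.eq_dec i i). Qed.

Lemma tilt_dir_ne k : k <> i -> tilt_dir k = edir X k.
Proof. unfold tilt_dir; now destruct (Nat.eq_dec k i). Qed.

Lemma tilt_multiple k : (S k < length X)%nat -> pos_multiple (edir X' k) (tilt_dir k).
Proof.
  intros Hk; destruct (Nat.eq_dec k i) as [->|Hki].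
  - rewrite tilt_dir_at, HD; apply pos_multiple_refl.
  - rewrite tilt_dir_ne by exact Hki; auto.
Qed.

Lemma tilt_dir_neq0 k : (S k < length X)%nat -> tilt_dir k <> (0,0).
Proof.
  intros Hk; destruct (Nat.eq_dec k i) as [->|Hki].
  - rewrite tilt_dir_at; apply (cross_neq0_l _ (edir X (pred i))).
    intros Hc; pose proof (tilt_inflection _ _ _ _ _ Hgood) as H; rewrite Hc in H; lra.
  - rewrite tilt_dir_ne by exact Hki; now apply (edir_neq0 l th).
Qed.

Lemma tilt_turn k : (1 <= k)%nat -> (S k < length X)%nat ->
  turn X' k = angle (tilt_dir (pred k)) (tilt_dir k).
Proof. intros; unfold turn; apply angle_pos_multiple; apply tilt_multiple; lia. Qed.

Lemma tilt_inflection_iff k : (S (S k) < length X)%nat ->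
  inflection X' k <-> has_both_adjacent X k /\
    0 < cross (tilt_dir k) (tilt_dir (pred k)) * cross (tilt_dir k) (tilt_dir (S k)).
Proof.
  intros Hk; rewrite inflection_iff; unfold has_both_adjacent; rewrite Hlen.
  rewrite (cross_sign_pos_multiple (tilt_dir k) _ (tilt_dir (pred k)) _ (tilt_dir (S k)))
    by (apply tilt_multiple; lia).
  reflexivity.
Qed.

Lemma tilt_nondegenerate : nondegenerate X'.
Proof.
  intros k Hk E'; unfold nedges in Hk; rewrite Hlen in Hk.
  apply (pos_multiple_neq0 _ _ (tilt_multiple k ltac:(lia)) (tilt_dir_neq0 k ltac:(lia))).
  unfold edir; rewrite E'; vring_pt.
Qed.

Lemma tilt_turn_le k : (1 <= k)%nat -> (S k < length X')%nat -> turn X' k <= th.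
Proof.
  intros Hk1 Hk2; rewrite Hlen in Hk2; rewrite tilt_turn by lia.
  pose proof Hinf as [[Hi1 _] _]; pose proof HX as (_ & Hturn & _).
  destruct (Nat.eq_dec k i) as [->|Hki]; [|destruct (Nat.eq_dec k (S i)) as [->|HkSi]].
  - rewrite tilt_dir_at, tilt_dir_ne by lia; apply (tilt_turn_prev _ _ _ _ _ Hgood).
  - simpl pred; rewrite tilt_dir_at, tilt_dir_ne by lia; apply (tilt_turn_next _ _ _ _ _ Hgood).
  - rewrite !tilt_dir_ne by lia; now apply Hturn.
Qed.

Lemma tilt_turn_neq0 : nonzero_turns X -> nonzero_turns X'.
Proof.
  intros Hnz k Hk1 Hk2; rewrite Hlen in Hk2; rewrite tilt_turn by lia.
  pose proof Hinf as [[Hi1 _] _]; pose proof (tilt_inflection _ _ _ _ _ Hgood) as Hc.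
  destruct (Nat.eq_dec k i) as [->|Hki]; [|destruct (Nat.eq_dec k (S i)) as [->|HkSi]].
  - rewrite tilt_dir_at, tilt_dir_ne by lia; apply angle_neq0.
    rewrite cross_anti; intros E'.
    replace (cross D (edir X (pred i))) with 0 in Hc by lra; lra.
  - simpl pred; rewrite tilt_dir_at, tilt_dir_ne by lia; apply angle_neq0.
    intros E'; rewrite E', Rmult_0_r in Hc; lra.
  - rewrite !tilt_dir_ne by lia; now apply Hnz.
Qed.

Lemma tilt_no_two_short k : (S k < nedges X')%nat -> ~ (short l X' k /\ short l X' (S k)).
Proof.
  unfold nedges; rewrite Hlen; intros Hk [Hs1 Hs2]; pose proof HX as (_ & _ & Hii & _).
  destruct (Nat.eq_dec k i) as [->|Hki].
  { apply (proj2 (Hshort_i Hs1)), Hshort; auto; lia. }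
  destruct (Nat.eq_dec (S k) i) as [<-|HSki].
  { apply (proj1 (Hshort_i Hs2)), Hshort; auto; lia. }
  apply (Hii k); [unfold nedges; lia|split; apply Hshort; auto; lia].
Qed.

Lemma tilt_short_noninflection k : short l X' k -> non_inflection X' k ->
  angle (edir X' (pred k)) (edir X' (S k)) <= th.
Proof.
  intros Hs [[Hk1 Hk2] Hni]; rewrite Hlen in Hk2.
  pose proof Hinf as [[Hi1 Hi2] _]; pose proof HX as (_ & _ & _ & Hiii).
  rewrite (angle_pos_multiple (tilt_dir (pred k)) _ (tilt_dir (S k))) by (apply tilt_multiple; lia).
  destruct (Nat.eq_dec k i) as [->|Hki].
  { exfalso; apply Hni, tilt_inflection_iff; [lia|split; [split; lia|]].
    rewrite tilt_dir_at, !tilt_dir_ne by lia; apply (tilt_inflection _ _ _ _ _ Hgood). }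
  assert (Hni_X : ~ inflection X k -> non_inflection X k) by (intros; split; [split|]; auto).
  destruct (Nat.eq_dec (S k) i) as [HSki|HSki]; [|destruct (Nat.eq_dec k (S i)) as [->|HkSi]].
  - replace k with (pred i) in * by lia; replace (S (pred i)) with i in * by lia.
    rewrite tilt_dir_at, tilt_dir_ne by lia. apply (tilt_short_prev _ _ _ _ _ Hgood).
    + apply Hshort; auto; lia.
    + apply Hni_X; intros Hi; apply Hni, tilt_inflection_iff; [lia|split; [split; lia|]].
      replace (S (pred i)) with i by lia; rewrite tilt_dir_at, !tilt_dir_ne by lia.
      now apply (tilt_inflection_prev _ _ _ _ _ Hgood).
  - simpl pred; rewrite tilt_dir_at, tilt_dir_ne by lia. apply (tilt_short_next _ _ _ _ _ Hgood).
    + apply Hshort; auto; lia.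
    + apply Hni_X; intros Hi; apply Hni, tilt_inflection_iff; [lia|split; [split; lia|]].
      simpl pred; rewrite tilt_dir_at, !tilt_dir_ne by lia.
      now apply (tilt_inflection_next _ _ _ _ _ Hgood).
  - rewrite !tilt_dir_ne by lia. apply Hiii; [apply Hshort; auto; lia|].
    apply Hni_X; intros Hi; apply Hni, tilt_inflection_iff; [lia|].
    rewrite !tilt_dir_ne by lia; now apply inflection_iff.
Qed.

Lemma dccp_tilt : dccp l th X' /\ (nonzero_turns X -> nonzero_turns X').
Proof.
  split; [|exact tilt_turn_neq0].
  split; [exact tilt_nondegenerate|split; [exact tilt_turn_le|split]].
  - exact tilt_no_two_short.
  - exact tilt_short_noninflection.
Qed.
End Tilt.

(** * Neighbours of an inflection edge of a discrete Dubins path are not short *)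

Fixpoint set_vtx (P : list pt) (m : nat) (p : pt) : list pt :=
  match P, m with
  | [], _ => []
  | _ :: P', O => p :: P'
  | q :: P', S m' => q :: set_vtx P' m' p
  end.

Lemma length_set_vtx P m p : length (set_vtx P m p) = length P.
Proof. revert m; induction P; intros [|m]; simpl; auto. Qed.

Lemma vtx_set_vtx_eq P m p : (m < length P)%nat -> vtx (set_vtx P m p) m = p.
Proof.
  unfold vtx; revert m; induction P; intros [|m] Hm; simpl in *; auto; try lia.
  apply IHP; lia.
Qed.

Lemma vtx_set_vtx_ne P m p i : i <> m -> vtx (set_vtx P m p) i = vtx P i.
Proof. unfold vtx; revert m i; induction P; intros [|m] [|i] Hi; simpl in *; auto; lia. Qed.

Lemma set_vtx_app P L m p : (m < length P)%nat -> set_vtx (P ++ L) m p = set_vtx P m p ++ L.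
Proof.
  revert m; induction P; intros [|m] Hm; simpl in *; auto; try lia.
  f_equal; apply IHP; lia.
Qed.

Lemma last_set_vtx P m p d : (S m < length P)%nat -> last (set_vtx P m p) d = last P d.
Proof.
  revert m; induction P as [|a P IH]; intros [|m] Hm; simpl in *; try lia.
  - destruct P; simpl in *; [lia|reflexivity].
  - destruct P as [|b P]; simpl in *; [lia|].
    rewrite <- (IH m) by lia. destruct m, P; reflexivity.
Qed.

Lemma edir_set_vtx_prev P m p : (1 <= m)%nat -> (m < length P)%nat ->
  edir (set_vtx P m p) (pred m) = vsub p (vtx P (pred m)).
Proof.
  intros; unfold edir; replace (S (pred m)) with m by lia.
  rewrite vtx_set_vtx_eq, vtx_set_vtx_ne by lia. reflexivity.
Qed.

Lemma edir_set_vtx_next P m p : (m < length P)%nat ->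
  edir (set_vtx P m p) m = vsub (vtx P (S m)) p.
Proof. intros; unfold edir; rewrite vtx_set_vtx_eq, vtx_set_vtx_ne by lia. reflexivity. Qed.

Lemma edir_set_vtx_other P m p i : i <> m -> S i <> m -> edir (set_vtx P m p) i = edir P i.
Proof. intros; unfold edir; rewrite !vtx_set_vtx_ne by lia. reflexivity. Qed.

Lemma path_length_set_vtx P m p : (1 <= m)%nat -> (S m < length P)%nat ->
  path_length P - path_length (set_vtx P m p) =
  norm (edir P (pred m)) + norm (edir P m)
  - norm (edir (set_vtx P m p) (pred m)) - norm (edir (set_vtx P m p) m).
Proof.
  intros Hm1 Hm2; rewrite edir_set_vtx_prev, edir_set_vtx_next by lia; revert m Hm1 Hm2.
  induction P as [|a P IH]; intros [|m] Hm1 Hm2; simpl in *; try lia.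
  destruct P as [|b P]; simpl in *; try lia.
  destruct m as [|m].
  - destruct P; simpl in *; [lia|]. unfold edir, vtx, Defs.dist; simpl; ring.
  - specialize (IH (S m) ltac:(lia) ltac:(lia)); simpl in IH.
    destruct P; simpl in *; [lia|]. unfold edir, vtx in *; simpl in *. rewrite <- IH; ring.
Qed.

(* Sliding vertex [m] (resp. [m+1]) along the preceding (resp. following) edge of the
   inflection edge [m]: that edge shrinks by the factor [1 - t], and edge [m] is tilted
   towards the side of its neighbours. *)
Definition slide_prev (X : list pt) (m : nat) (t : R) : list pt :=
  set_vtx X m (vsub (vtx X m) (vscale t (edir X (pred m)))).

Definition slide_next (X : list pt) (m : nat) (t : R) : list pt :=
  set_vtx X (S m) (vadd (vtx X (S m)) (vscale t (edir X (S m)))).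

Section Slide.
Variables (l th : R) (X : list pt) (m : nat).
Hypotheses (Hth : th <= PI / 2) (HX : dccp l th X) (Hinf : inflection X m)
  (Hlong : ~ short l X m).

Let w := edir X (pred m).
Let d := edir X m.
Let z := edir X (S m).

Lemma slide_bounds : (1 <= m)%nat /\ (S (S m) < length X)%nat /\
  0 < cross d w * cross d z /\ 0 <= dot d w /\ 0 <= dot d z.
Proof.
  pose proof Hinf as [[Hm1 Hm2] Hwz]%inflection_iff.
  repeat split; auto.
  - rewrite dot_comm; apply (dot_nonneg_turn l th); auto; lia.
  - apply (dot_nonneg_turn l th X (S m)); auto; lia.
Qed.

Lemma slide_dccp k0 Q t : k0 = pred m \/ k0 = S m -> short l X k0 -> 0 < t < 1 ->
  good_tilt l th X m (vadd d (vscale t (edir X k0))) -> length Q = length X ->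
  edir Q m = vadd d (vscale t (edir X k0)) -> edir Q k0 = vscale (1 - t) (edir X k0) ->
  (forall k, k <> m -> k <> k0 -> edir Q k = edir X k) ->
  dccp l th Q /\ (nonzero_turns X -> nonzero_turns Q).
Proof.
  intros Hk0 Hshort Ht Hgood Hlen Hm Hk0' Hother.
  pose proof slide_bounds as (Hm1 & Hm2 & _ & Hdw & Hdz).
  apply (dccp_tilt l th X Q m (vadd d (vscale t (edir X k0)))); auto.
  - intros k Hk Hkm; destruct (Nat.eq_dec k k0) as [->|Hkk0].
    + exists (1 - t); split; [lra|exact Hk0'].
    + rewrite Hother by auto; apply pos_multiple_refl.
  - intros k Hk Hkm; destruct (Nat.eq_dec k k0) as [->|Hkk0]; [auto|].
    unfold short, elen; rewrite Hother; auto.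
  - intros Hs; exfalso; apply Hlong; unfold short, elen in *; rewrite Hm in Hs.
    assert (0 <= dot d (edir X k0)) by (destruct Hk0 as [->| ->]; auto).
    pose proof (norm_le_add_scale d (edir X k0) t ltac:(lra) ltac:(auto)); fold d; lra.
Qed.

Lemma eventually_slide_prev : short l X (pred m) ->
  eventually (fun t => dccp l th (slide_prev X m t) /\
    (nonzero_turns X -> nonzero_turns (slide_prev X m t)) /\
    path_length (slide_prev X m t) < path_length X).
Proof.
  intros Hshort; pose proof slide_bounds as (Hm1 & Hm2 & Hwz & _).
  assert (Hdw : cross d w <> 0) by (intros E; rewrite E in Hwz; lra).
  assert (HT : 0 < cross d w * cross d w) by (apply Rsqr_pos_lt; auto).
  apply (eventually_impl _ _ (eventually_and _ _ (eventually_lt 1 Rlt_0_1)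
    (eventually_good_tilt l th X m w Hth HX Hinf HT))); intros t Ht [Ht1 Hgood].
  assert (Hat : edir (slide_prev X m t) m = vadd d (vscale t w)).
  { unfold slide_prev; rewrite edir_set_vtx_next by lia; unfold d, w, edir; vring_pt. }
  assert (Hprev : edir (slide_prev X m t) (pred m) = vscale (1 - t) w).
  { unfold slide_prev; rewrite edir_set_vtx_prev by lia; unfold w, edir.
    replace (S (pred m)) with m by lia; vring_pt. }
  destruct (slide_dccp (pred m) (slide_prev X m t) t) as [Hdccp Hnz]; auto.
  { apply length_set_vtx. }
  { intros k Hk1 Hk2; apply edir_set_vtx_other; lia. }
  split; [exact Hdccp|split; [exact Hnz|]].
  pose proof (path_length_set_vtx X m (vsub (vtx X m) (vscale t (edir X (pred m))))
    Hm1 ltac:(lia)) as E.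
  fold (slide_prev X m t) in E; rewrite Hat, Hprev, norm_scale in E by lra; fold w d in E.
  pose proof (norm_add_scale_lt d w t Ht Hdw); lra.
Qed.

Lemma eventually_slide_next : short l X (S m) ->
  eventually (fun t => dccp l th (slide_next X m t) /\
    (nonzero_turns X -> nonzero_turns (slide_next X m t)) /\
    path_length (slide_next X m t) < path_length X).
Proof.
  intros Hshort; pose proof slide_bounds as (Hm1 & Hm2 & Hwz & _).
  assert (Hdz : cross d z <> 0) by (intros E; rewrite E in Hwz; lra).
  apply (eventually_impl _ _ (eventually_and _ _ (eventually_lt 1 Rlt_0_1)
    (eventually_good_tilt l th X m z Hth HX Hinf Hwz))); intros t Ht [Ht1 Hgood].
  assert (Hat : edir (slide_next X m t) m = vadd d (vscale t z)).
  { unfold slide_next; rewrite <- (Nat.pred_succ m) at 3.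
    rewrite edir_set_vtx_prev by lia; simpl pred; unfold d, z, edir; vring_pt. }
  assert (Hnext : edir (slide_next X m t) (S m) = vscale (1 - t) z).
  { unfold slide_next; rewrite edir_set_vtx_next by lia; unfold z, edir; vring_pt. }
  destruct (slide_dccp (S m) (slide_next X m t) t) as [Hdccp Hnz]; auto.
  { apply length_set_vtx. }
  { intros k Hk1 Hk2; apply edir_set_vtx_other; lia. }
  split; [exact Hdccp|split; [exact Hnz|]].
  pose proof (path_length_set_vtx X (S m) (vadd (vtx X (S m)) (vscale t (edir X (S m))))
    ltac:(lia) ltac:(lia)) as E.
  fold (slide_next X m t) in E; simpl pred in E; rewrite Hat, Hnext, norm_scale in E by lra.
  fold d z in E.
  pose proof (norm_add_scale_lt d z t Ht Hdz); lra.
Qed.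
End Slide.

Lemma vtx_app P L i : (i < length P)%nat -> vtx (P ++ L) i = vtx P i.
Proof. intros; unfold vtx; apply app_nth1; auto. Qed.

Lemma edir_app P L i : (S i < length P)%nat -> edir (P ++ L) i = edir P i.
Proof. intros; unfold edir; rewrite !vtx_app by lia; reflexivity. Qed.

Lemma inflection_cons a P i : inflection P i -> inflection (a :: P) (S i).
Proof.
  intros [[Hi1 Hi2] H]%inflection_iff; apply inflection_iff.
  split; [split; simpl; lia|]. destruct i as [|i]; [lia|]. exact H.
Qed.

Lemma inflection_app P L i : inflection P i -> inflection (P ++ L) i.
Proof.
  intros [[Hi1 Hi2] H]%inflection_iff; apply inflection_iff.
  split; [split; rewrite ?length_app; lia|]. rewrite !edir_app by lia; exact H.
Qed.

Lemma short_app l P L i : (S i < length P)%nat -> short l (P ++ L) i <-> short l P i.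
Proof. intros; unfold short, elen; rewrite edir_app by lia; reflexivity. Qed.

Lemma slide_prev_cons a P m t : (1 <= m)%nat -> slide_prev (a :: P) (S m) t = a :: slide_prev P m t.
Proof. intros; destruct m; [lia|reflexivity]. Qed.

Lemma slide_prev_app P L m t : (1 <= m)%nat -> (S m < length P)%nat ->
  slide_prev (P ++ L) m t = slide_prev P m t ++ L.
Proof. intros; unfold slide_prev; rewrite vtx_app, edir_app, set_vtx_app by lia; reflexivity. Qed.

Lemma slide_next_cons a P m t : slide_next (a :: P) (S m) t = a :: slide_next P m t.
Proof. reflexivity. Qed.

Lemma slide_next_app P L m t : (S (S m) < length P)%nat ->
  slide_next (P ++ L) m t = slide_next P m t ++ L.
Proof. intros; unfold slide_next; rewrite vtx_app, edir_app, set_vtx_app by lia; reflexivity. Qed.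

Lemma dubins_le_set_vtx l th u U v V P m p : dubins l th u U v V P ->
  (1 <= m)%nat -> (S m < length P)%nat ->
  dccp l th (set_vtx P m p) -> nonzero_turns (set_vtx P m p) ->
  dccp l th (vsub u U :: set_vtx P m p) -> dccp l th (set_vtx P m p ++ [vadd v V]) ->
  path_length P <= path_length (set_vtx P m p).
Proof.
  intros (_ & _ & (P' & -> & _) & (_ & Hlast & _) & Hmin) Hm1 Hm2 Hd Hnz Hstart Hend.
  apply Hmin; auto.
  - destruct m as [|m]; [lia|]. exists (set_vtx P' m p); split; [reflexivity|exact Hstart].
  - split; [|split; [rewrite last_set_vtx by lia; exact Hlast|exact Hend]].
    destruct m; discriminate.
Qed.

Lemma dubins_not_short_prev l th u U v V P j : th <= PI / 2 ->
  dubins l th u U v V P -> inflection P j -> ~ short l P (pred j).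
Proof.
  intros Hth HP Hinf Hs. pose proof HP as (Hd & Hnz & (P' & HPe & Hstart) & (_ & _ & Hend) & _).
  pose proof Hinf as [[Hj1 Hj2] _]; pose proof Hd as (_ & _ & Hii & _).
  destruct j as [|j]; [lia|]; simpl pred in *.
  assert (Hlong : ~ short l P (S j)) by (intros Hs'; apply (Hii j); [unfold nedges; lia|auto]).
  assert (E1 := eventually_slide_prev l th P (S j) Hth Hd Hinf Hlong Hs).
  assert (E2 := eventually_slide_prev l th _ (S (S j)) Hth Hstart
    (inflection_cons _ _ _ Hinf) Hlong Hs).
  assert (E3 := eventually_slide_prev l th _ (S j) Hth Hend (inflection_app _ _ _ Hinf)
    (fun H => Hlong (proj1 (short_app l P _ (S j) ltac:(lia)) H))
    (proj2 (short_app l P _ j ltac:(lia)) Hs)).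
  destruct (eventually_witness _ (eventually_and _ _ E1 (eventually_and _ _ E2 E3)))
    as (t & _ & (Hdt & Hnzt & Hlt) & (Hdt' & _) & (Hdt'' & _)).
  rewrite slide_prev_cons in Hdt' by lia; rewrite slide_prev_app in Hdt'' by lia.
  pose proof (dubins_le_set_vtx l th u U v V P (S j) _ HP Hj1 ltac:(lia) Hdt (Hnzt Hnz) Hdt' Hdt'').
  unfold slide_prev in Hlt; lra.
Qed.

Lemma dubins_not_short_next l th u U v V P j : th <= PI / 2 ->
  dubins l th u U v V P -> inflection P j -> ~ short l P (S j).
Proof.
  intros Hth HP Hinf Hs. pose proof HP as (Hd & Hnz & (P' & HPe & Hstart) & (_ & _ & Hend) & _).
  pose proof Hinf as [[Hj1 Hj2] _]; pose proof Hd as (_ & _ & Hii & _).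
  assert (Hlong : ~ short l P j) by (intros Hs'; apply (Hii j); [unfold nedges; lia|auto]).
  assert (E1 := eventually_slide_next l th P j Hth Hd Hinf Hlong Hs).
  assert (E2 := eventually_slide_next l th _ (S j) Hth Hstart
    (inflection_cons _ _ _ Hinf) Hlong Hs).
  assert (E3 := eventually_slide_next l th _ j Hth Hend (inflection_app _ _ _ Hinf)
    (fun H => Hlong (proj1 (short_app l P _ j ltac:(lia)) H))
    (proj2 (short_app l P _ (S j) ltac:(lia)) Hs)).
  destruct (eventually_witness _ (eventually_and _ _ E1 (eventually_and _ _ E2 E3)))
    as (t & _ & (Hdt & Hnzt & Hlt) & (Hdt' & _) & (Hdt'' & _)).
  rewrite slide_next_cons in Hdt'; rewrite slide_next_app in Hdt'' by lia.
  pose proof (dubins_le_set_vtx l th u U v V P (S j) _ HP ltac:(lia) ltac:(lia)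
    Hdt (Hnzt Hnz) Hdt' Hdt'').
  unfold slide_next in Hlt; lra.
Qed.

(** * Translating the tail of a path *)

Lemma length_translate_tail P k T : (k <= length P)%nat ->
  length (translate_tail P k T) = length P.
Proof.
  intros Hk; unfold translate_tail.
  rewrite length_app, length_map, length_skipn, firstn_length_le; lia.
Qed.

Lemma vtx_translate_tail_lt P k T i : (i < k)%nat -> (k <= length P)%nat ->
  vtx (translate_tail P k T) i = vtx P i.
Proof.
  intros Hi Hk; unfold vtx, translate_tail.
  rewrite app_nth1 by (rewrite firstn_length_le; lia).
  rewrite nth_firstn; replace (i <? k)%nat with true by (symmetry; apply Nat.ltb_lt; lia).
  reflexivity.
Qed.

Lemma vtx_translate_tail_ge P k T i : (k <= i)%nat -> (i < length P)%nat ->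
  vtx (translate_tail P k T) i = vadd T (vtx P i).
Proof.
  intros Hi Hk; unfold vtx, translate_tail.
  rewrite app_nth2 by (rewrite firstn_length_le; lia).
  rewrite firstn_length_le by lia.
  rewrite nth_indep with (d' := vadd T (0,0)) by (rewrite length_map, length_skipn; lia).
  rewrite map_nth, nth_skipn; do 2 f_equal; lia.
Qed.

Lemma edir_translate_tail_cut P k T : (S k < length P)%nat ->
  edir (translate_tail P (S k) T) k = vadd (edir P k) T.
Proof.
  intros; unfold edir.
  rewrite vtx_translate_tail_ge, vtx_translate_tail_lt by lia. vring_pt.
Qed.

Lemma edir_translate_tail_other P k T i : (k < length P)%nat -> (S i < length P)%nat -> i <> k ->
  edir (translate_tail P (S k) T) i = edir P i.
Proof.
  intros; unfold edir. destruct (Nat.lt_ge_cases i k).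
  - rewrite !vtx_translate_tail_lt by lia. reflexivity.
  - rewrite !vtx_translate_tail_ge by lia. vring_pt.
Qed.

Lemma translate_tail_dccp l th P j T : th <= PI / 2 -> dccp l th P -> inflection P j ->
  admissible P j T -> ~ short l P (pred j) -> ~ short l P (S j) ->
  exists eps, 0 < eps /\ dccp l th (translate_tail P (S j) (vscale eps T)).
Proof.
  intros Hth HP Hinf HT Hprev Hnext.
  pose proof Hinf as [[Hj1 Hj2] Hwz]%inflection_iff; unfold admissible in HT.
  assert (Hside : 0 < cross (edir P j) (edir P (pred j)) * cross (edir P j) T).
  { apply (same_sign_trans (cross (edir P j) (edir P (S j)))); rewrite Rmult_comm; lra. }
  destruct (eventually_witness _ (eventually_good_tilt l th P j T Hth HP Hinf Hside))
    as (eps & Heps & Hgood).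
  exists eps; split; [exact Heps|].
  apply (dccp_tilt l th P _ j (vadd (edir P j) (vscale eps T))); auto.
  - apply length_translate_tail; lia.
  - apply edir_translate_tail_cut; lia.
  - intros k Hk Hkj; rewrite edir_translate_tail_other by lia; apply pos_multiple_refl.
  - intros k Hk Hkj; unfold short, elen; rewrite edir_translate_tail_other by lia; auto.
Qed.

Theorem lemma3 (theta l : R) (k : nat)
  (Htheta_pos : 0 <= theta) (Htheta_le : theta <= PI / 2)
  (Hk : theta * INR k = 2 * PI) (Hl : 0 < l)
  (u U v V : pt) (HU : is_config l U) (HV : is_config l V)
  (P : list pt) (HP : dubins l theta u U v V P)
  (j : nat) (Hinf : inflection P j)
  (T : pt) (HT : admissible P j T) :
  exists eps : R, 0 < eps /\
    dccp l theta (translate_tail P (S j) (vscale eps T)).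
Proof.
  apply (translate_tail_dccp l theta P j T Htheta_le (proj1 HP) Hinf HT).
  - exact (dubins_not_short_prev l theta u U v V P j Htheta_le HP Hinf).
  - exact (dubins_not_short_next l theta u U v V P j Htheta_le HP Hinf).
Qed.
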